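(* Let $Q$ be a quantity space over a field $K$ with a basis $\{e_1,\ldots,e_n\}$, and let $x=\mu\cdot\prod_{i=1}^n e_i^{k_i}$ (with $\mu\in K$, $k_i\in\mathbb{Z}$). Then the following are equivalent: (1) $x$ is a non-zero quantity; (2) $\mu\neq0$; (3) $x$ is invertible.
   Context: A scalable monoid over a (unital, associative) ring $R$ is a monoid $X$ (identity $1_X$, product written $xy$) together with a map $R\times X\to X$, $(\alpha,x)\mapsto\alpha\cdot x$, such that $1\cdot x=x$, $\alpha\cdot(\beta\cdot x)=\alpha\beta\cdot x$ and $\alpha\cdot(xy)=(\alpha\cdot x)y=x(\alpha\cdot y)$. A quantity space over a field $K$ is a commutative scalable monoid $Q$ over $K$ for which there exists a basis, i.e. a finite set $\{e_1,\ldots,e_n\}$ of invertible elements of $Q$ such that every $x\in Q$ has a unique expansion $x=\mu\cdot\prod_{i=1}^n e_i^{k_i}$ with $\mu\in K$ and $k_i\in\mathbb{Z}$. Elements of $Q$ are called quantities. A quantity $x$ is a zero quantity if $x=0\cdot x$ (equivalently, $x$ is the zero element $0\cdot y$ of its commensurability class, where $x\sim y$ iff $\alpha\cdot x=\beta\cdot y$ for some $\alpha,\beta\in K$); otherwise it is non-zero. *)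

From mathcomp Require Import all_boot all_order all_algebra.
Set Implicit Arguments. Unset Strict Implicit. Unset Printing Implicit Defensive.
Import GRing.Theory Num.Theory.
Local Open Scope ring_scope.

Section QS.
Variables (K : fieldType) (Q : Type).
Variables (mul : Q -> Q -> Q) (one : Q) (sc : K -> Q -> Q).

Definition is_comm_scalable_monoid : Prop :=
  (forall x y z, mul x (mul y z) = mul (mul x y) z) /\
  (forall x, mul one x = x) /\ (forall x, mul x one = x) /\
  (forall x y, mul x y = mul y x) /\
  (forall x, sc 1 x = x) /\
  (forall a b x, sc a (sc b x) = sc (a * b) x) /\
  (forall a x y, sc a (mul x y) = mul (sc a x) y /\ sc a (mul x y) = mul x (sc a y)).

Definition invertible (x : Q) : Prop :=
  exists y, mul x y = one /\ mul y x = one.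

Definition zero_quantity (x : Q) : Prop := x = sc 0 x.

Fixpoint npow (x : Q) (m : nat) : Q :=
  if m is m'.+1 then mul x (npow x m') else one.

(* integer power of e, given an inverse e' of e *)
Definition zpow (e e' : Q) (k : int) : Q :=
  match k with
  | Posz m => npow e m
  | Negz m => npow e' m.+1
  end.

Definition expansion (n : nat) (e e' : 'I_n -> Q) (mu : K) (k : 'I_n -> int) : Q :=
  sc mu (\big[mul/one]_(i < n) zpow (e i) (e' i) (k i)).

Definition is_basis (n : nat) (e e' : 'I_n -> Q) : Prop :=
  (forall i, mul (e i) (e' i) = one /\ mul (e' i) (e i) = one) /\
  (forall x : Q, exists mu k,
      x = expansion e e' mu k /\
      forall mu' k', x = expansion e e' mu' k' -> mu' = mu /\ (forall i, k' i = k i)).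

End QS.

(** A basis expansion [mu . P] has an invertible monomial part [P], so it is
    invertible as soon as [mu] is.  Conversely, if [mu = 0] then [x] is a zero
    quantity; were it invertible, [1 = x y] would be one as well, which forces
    the scalar action to be trivial and contradicts the uniqueness of the
    coefficient in the expansion of [1].  Finally a zero quantity [x] also has
    the expansion [0 . P], so uniqueness of coefficients gives [mu = 0]. *)
From mathcomp Require Import all_boot all_order all_algebra.
Import GRing.Theory.

Set Implicit Arguments.
Unset Strict Implicit.
Local Open Scope ring_scope.

Section ScalableMonoid.
Variables (K : fieldType) (Q : Type) (mul : Q -> Q -> Q) (one : Q) (sc : K -> Q -> Q).
Hypothesis HQ : is_comm_scalable_monoid mul one sc.

Let mulA : forall x y z, mul x (mul y z) = mul (mul x y) z.
Proof. by case: HQ. Qed.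
Let mul1q : forall x, mul one x = x.
Proof. by case: HQ => _ []. Qed.
Let mulq1 : forall x, mul x one = x.
Proof. by case: HQ => _ [_ []]. Qed.
Let scale1q : forall x, sc 1 x = x.
Proof. by case: HQ => _ [_ [_ [_ []]]]. Qed.
Let scaleA : forall a b x, sc a (sc b x) = sc (a * b) x.
Proof. by case: HQ => _ [_ [_ [_ [_ []]]]]. Qed.
Let scale_mull : forall a x y, sc a (mul x y) = mul (sc a x) y.
Proof. by case: HQ => _ [_ [_ [_ [_ [_ H]]]]] a x y; case: (H a x y). Qed.
Let scale_mulr : forall a x y, sc a (mul x y) = mul x (sc a y).
Proof. by case: HQ => _ [_ [_ [_ [_ [_ H]]]]] a x y; case: (H a x y). Qed.

Local Notation invertible := (invertible mul one).
Local Notation zero_quantity := (zero_quantity sc).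

Lemma invertible_one : invertible one.
Proof. by exists one; rewrite mul1q. Qed.

Lemma invertible_mul x y : invertible x -> invertible y -> invertible (mul x y).
Proof.
move=> [x' [xx' x'x]] [y' [yy' y'y]]; exists (mul y' x'); split.
- by rewrite -mulA (mulA y) yy' mul1q.
- by rewrite -mulA (mulA x') x'x mul1q.
Qed.

Lemma invertible_npow x m : invertible x -> invertible (npow mul one x m).
Proof.
by move=> invx; elim: m => [|m IHm] /=; [exact: invertible_one | exact: invertible_mul].
Qed.

Lemma invertible_zpow e e' m :
  mul e e' = one -> mul e' e = one -> invertible (zpow mul one e e' m).
Proof.
move=> ee' e'e; case: m => m; apply: invertible_npow.
- by exists e'.
- by exists e.
Qed.

Lemma invertible_scale a x : a != 0 -> invertible x -> invertible (sc a x).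
Proof.
move=> a_neq0 [x' [xx' x'x]]; exists (sc a^-1 x'); split.
- by rewrite -scale_mull -scale_mulr scaleA xx' divff // scale1q.
- by rewrite -scale_mull -scale_mulr scaleA x'x mulVf // scale1q.
Qed.

Lemma zero_quantity_scale0 x : zero_quantity (sc 0 x).
Proof. by rewrite /zero_quantity scaleA mul0r. Qed.

Lemma zero_quantity_one_of_invertible x :
  invertible x -> zero_quantity x -> zero_quantity one.
Proof. by move=> [y [xy _]] x0; rewrite /zero_quantity -xy scale_mull -x0. Qed.

(* [z = z * 1 = z * (0 . 1) = 0 . z], after which [a . z = a . (0 . z) = 0 . z]. *)
Lemma scale_trivial_of_zero_quantity_one :
  zero_quantity one -> forall a z, sc a z = z.
Proof.
move=> one0 a z.
have z0 : sc 0 z = z by rewrite -{2}(mulq1 z) one0 -scale_mulr mulq1.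
by rewrite -z0 scaleA mulr0.
Qed.

Section Basis.
Variables (n : nat) (e e' : 'I_n -> Q).
Hypothesis Hbasis : is_basis mul one sc e e'.

Local Notation expansion := (expansion mul one sc e e').

Lemma expansion_coef_unique x mu1 k1 mu2 k2 :
  x = expansion mu1 k1 -> x = expansion mu2 k2 -> mu1 = mu2.
Proof.
case: Hbasis => _ /(_ x) [mu [k [_ uniq_x]]] x1 x2.
by rewrite (proj1 (uniq_x _ _ x1)) (proj1 (uniq_x _ _ x2)).
Qed.

Lemma basis_one_nonzero : ~ zero_quantity one.
Proof.
move=> /scale_trivial_of_zero_quantity_one trivial_sc.
case: Hbasis => _ /(_ one) [mu [k [one_mu _]]].
have one_mu1 : one = expansion (mu + 1) k by rewrite {1}one_mu /expansion !trivial_sc.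
have /eqP := expansion_coef_unique one_mu1 one_mu.
by rewrite -subr_eq0 addrC addKr oner_eq0.
Qed.

Lemma zero_quantity_expansion mu k :
  zero_quantity (expansion mu k) -> mu = 0.
Proof.
move=> x0; apply: (expansion_coef_unique (erefl (expansion mu k))).
by rewrite {1}x0 /expansion scaleA mul0r.
Qed.

Lemma invertible_monomial k :
  invertible (\big[mul/one]_(i < n) zpow mul one (e i) (e' i) (k i)).
Proof.
case: Hbasis => inv_e _.
apply: (big_ind invertible); [exact: invertible_one | exact: invertible_mul |].
by move=> i _; case: (inv_e i) => ee' e'e; exact: invertible_zpow.
Qed.

End Basis.
End ScalableMonoid.

Theorem proposition3p4 (K : fieldType) (Q : Type) (mul : Q -> Q -> Q) (one : Q)
    (sc : K -> Q -> Q) (n : nat) (e e' : 'I_n -> Q)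
    (HQ : is_comm_scalable_monoid mul one sc)
    (Hbasis : is_basis mul one sc e e')
    (mu : K) (k : 'I_n -> int) (x : Q)
    (Hx : x = expansion mul one sc e e' mu k) :
  (~ zero_quantity sc x <-> mu != 0) /\ (mu != 0 <-> invertible mul one x).
Proof.
have x_eq0_zero : mu = 0 -> zero_quantity sc x.
  by move=> mu0; rewrite Hx /expansion mu0; exact: (zero_quantity_scale0 HQ).
split; split.
- by move=> x_nz; apply/eqP => mu0; exact/x_nz/x_eq0_zero.
- by move=> /eqP mu_neq0; rewrite Hx => /(zero_quantity_expansion HQ Hbasis).
- move=> mu_neq0; rewrite Hx.
  exact: (invertible_scale HQ mu_neq0 (invertible_monomial HQ Hbasis k)).
- move=> x_inv; apply/eqP => mu0; apply: (basis_one_nonzero HQ Hbasis).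
  exact: zero_quantity_one_of_invertible x_inv (x_eq0_zero mu0).
Qed.
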